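(* In the Shepp--Olkin setting with $p_i'\ge0$ for all $i$ and $v=\sum_ip_i'>0$, fix $t$ with $f_k(t)>0$ for all $k$, and let $\alpha_k=\frac{\sum_ip_i'p_i(t)f_{k-1}^{(i)}(t)}{vf_k(t)}$. Then for all $k=0,\ldots,n-2$, $$\alpha_{k+1}(1-\alpha_{k+1})f_{k+1}^2-\alpha_{k+2}(1-\alpha_k)f_kf_{k+2}\ge0$$ (all evaluated at $t$).
   Context: Shepp--Olkin setting: $p_1,\ldots,p_n:[0,1]\to[0,1]$ are affine functions with constant derivatives $p_i'$. $f_k(t)$, $k=0,\ldots,n$, is the probability mass function of a sum of independent Bernoulli variables with parameters $p_1(t),\ldots,p_n(t)$; $f^{(i)}_k(t)$ is the mass function of the sum omitting the $i$-th variable (extended by $0$ outside $\{0,\ldots,n-1\}$). *)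

From HB Require Import structures.
From mathcomp Require Import all_boot all_order all_algebra.
Set Implicit Arguments. Unset Strict Implicit. Unset Printing Implicit Defensive.
Import Order.TTheory GRing.Theory Num.Theory.
Local Open Scope ring_scope.

(* pmf of the sum of independent Bernoulli(q i), i < n, at value k:
   sum over the sets S of indices of successes with #|S| = k. *)
Definition bern_pmf (R : realFieldType) (n : nat) (q : 'I_n -> R) (k : nat) : R :=
  \sum_(S : {set 'I_n} | #|S| == k)
     (\prod_(j in S) q j) * (\prod_(j in ~: S) (1 - q j)).

Definition bern_pmf_omit (R : realFieldType) (n : nat) (q : 'I_n -> R)
    (i : 'I_n) (k : nat) : R :=
  \sum_(S : {set 'I_n} | (i \notin S) && (#|S| == k))
     (\prod_(j in S) q j) * (\prod_(j in (~: S) :\ i) (1 - q j)).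

(* f^{(i)}_{k-1}, extended by 0 at index -1 (i.e. when k = 0). *)
Definition bern_pmf_omit_pred (R : realFieldType) (n : nat) (q : 'I_n -> R)
    (i : 'I_n) (k : nat) : R :=
  if k is k'.+1 then bern_pmf_omit q i k' else 0.

Definition so_alpha (R : realFieldType) (n : nat) (dp q : 'I_n -> R) (k : nat) : R :=
  (\sum_(i < n) dp i * q i * bern_pmf_omit_pred q i k) /
  ((\sum_(i < n) dp i) * bern_pmf q k).

From HB Require Import structures.
From mathcomp Require Import all_boot all_order all_algebra.
Import Order.TTheory GRing.Theory Num.Theory.
Local Open Scope ring_scope.
From mathcomp Require Import ring lra.

(* Write p_i = p_i(t), b_i = p_i', v = sum_i b_i, and let f^{(i)} be the pmf
   of the sum omitting the i-th variable.  Conditioning on the i-th variable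
   gives f_m = p_i f^{(i)}_{m-1} + (1 - p_i) f^{(i)}_m, hence
     v f_m = G_{m-1} + H_m,   G_m = sum_i b_i p_i f^{(i)}_m,
                              H_m = sum_i b_i (1 - p_i) f^{(i)}_m,
   so alpha_m = G_{m-1} / (v f_m) and 1 - alpha_m = H_m / (v f_m).  The
   quantity to bound is therefore (G_k H_{k+1} - G_{k+1} H_k) / v^2.
   Expanding the numerator as a double sum over (i, j) and conditioning
   once more on the j-th variable, the symmetrised term (i, j) + (j, i)
   equals b_i b_j (p_i - p_j)^2 (F_k^2 - F_{k-1} F_{k+1}), where F is the pmf
   of the sum omitting both i and j.  This is nonnegative because Bernoulli
   sums have log-concave pmfs. *)

Set Implicit Arguments. Unset Strict Implicit.

Section LogConcave.
Variable R : realFieldType.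

Definition shift (F : nat -> R) (k : nat) : R := if k is k'.+1 then F k' else 0.

(* Log-concavity in the form F_i F_{j+2} <= F_{i+1} F_{j+1} for all i <= j:
   unlike the local condition F_k^2 >= F_{k-1} F_{k+1}, this form is stable
   under Bernoulli convolution even when F has internal zeros. *)
Definition log_concave (F : nat -> R) : Prop :=
  (forall k, 0 <= F k) /\
  (forall i j, (i <= j)%N -> F i * F j.+2 <= F i.+1 * F j.+1).

Lemma log_concave_ext (F G : nat -> R) : F =1 G -> log_concave G -> log_concave F.
Proof. by move=> eFG [G0 GL]; split=> [k|i j ij]; rewrite !eFG //; apply: GL. Qed.

Lemma log_concave_local (F : nat -> R) k :
  log_concave F -> shift F k * F k.+1 <= F k ^+ 2.
Proof.
case=> F0 FL; case: k => [|k] /=; first by rewrite mul0r sqr_ge0.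
by rewrite expr2; apply: FL.
Qed.

Lemma log_concave_shift (F : nat -> R) : log_concave F -> log_concave (shift F).
Proof.
case=> F0 FL; split=> [[|k] //|[|i] j ij] /=; first exact: F0.
  by rewrite mul0r mulr_ge0.
by case: j ij => [|j] // ij; apply: FL.
Qed.

Lemma log_concave_mix (F : nat -> R) (p : R) : 0 <= p <= 1 ->
  log_concave F -> log_concave (fun k => p * F k + (1 - p) * F k.+1).
Proof.
move=> /andP[p0 p1] [F0 FL]; have q0 : 0 <= 1 - p by lra.
split=> [k|i j ij]; first by rewrite addr_ge0 // mulr_ge0.
have FLij := FL i j ij; have FLij1 := FL i.+1 j.+1 ij.
have FLfar : F i * F j.+3 <= F i.+2 * F j.+1.
  apply: le_trans (FL i j.+1 (leqW ij)) _.
  by move: ij; rewrite leq_eqVlt => /orP[/eqP->|/FL//]; rewrite mulrC.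
rewrite -subr_ge0.
have -> : (p * F i.+1 + (1 - p) * F i.+2) * (p * F j.+1 + (1 - p) * F j.+2) -
          (p * F i + (1 - p) * F i.+1) * (p * F j.+2 + (1 - p) * F j.+3) =
          p * p * (F i.+1 * F j.+1 - F i * F j.+2) +
          (1 - p) * (1 - p) * (F i.+2 * F j.+2 - F i.+1 * F j.+3) +
          p * (1 - p) * (F i.+2 * F j.+1 - F i * F j.+3) by ring.
by rewrite !addr_ge0 // !mulr_ge0 // subr_ge0.
Qed.

End LogConcave.

Section BernoulliSum.
Variables (R : realFieldType) (n : nat) (q : 'I_n -> R).

Definition pmf_on (A : {set 'I_n}) (k : nat) : R :=
  \sum_(S : {set 'I_n} | (S \subset A) && (#|S| == k))
     (\prod_(j in S) q j) * (\prod_(j in A :\: S) (1 - q j)).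

Lemma bern_pmfE k : bern_pmf q k = pmf_on setT k.
Proof. by apply: eq_big => [S|S _]; rewrite ?subsetT ?setTD. Qed.

Lemma bern_pmf_omitE i k : bern_pmf_omit q i k = pmf_on (~: [set i]) k.
Proof.
apply: eq_big => [S|S _]; first by rewrite subsetC sub1set inE.
by congr (_ * _); apply: eq_bigl => j; rewrite !inE andbC.
Qed.

Lemma pmf_on_with (A : {set 'I_n}) i k : i \in A ->
  \sum_(S : {set 'I_n} | (S \subset A) && (#|S| == k) && (i \in S))
     (\prod_(j in S) q j) * (\prod_(j in A :\: S) (1 - q j))
  = q i * shift (pmf_on (A :\ i)) k.
Proof.
move=> iA; rewrite (reindex_onto (fun T => i |: T) (fun S => S :\ i)) /=; last first.
  by move=> S /andP[_ iS]; rewrite setD1K.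
have rangeE (T : {set 'I_n}) :
    (i |: T \subset A) && (#|i |: T| == k) && (i \in i |: T) && ((i |: T) :\ i == T)
    = (T \subset A :\ i) && (#|T|.+1 == k).
  case iT: (i \in T).
    have /negbTE-> : (i |: T) :\ i != T.
      by apply: contraTneq iT => <-; rewrite !inE eqxx.
    by rewrite subsetD1 iT !andbF.
  by rewrite setU1K ?iT // eqxx cardsU1 iT setU11 subsetD1 iT subUset sub1set iA !andbT.
rewrite (eq_bigl _ _ rangeE) {rangeE}; case: k => [|k] /=.
  by rewrite big_pred0 ?mulr0 // => T; rewrite andbF.
rewrite mulr_sumr; apply: eq_big => [T|T /andP[]]; first by rewrite eqSS.
rewrite subsetD1 => /andP[_ iT] _.
rewrite big_setU1 //= -mulrA; congr (_ * (_ * _)).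
by apply: eq_bigl => j; rewrite !inE; case: (j == i); case: (j \in T).
Qed.

Lemma pmf_on_without (A : {set 'I_n}) i k : i \in A ->
  \sum_(S : {set 'I_n} | (S \subset A) && (#|S| == k) && (i \notin S))
     (\prod_(j in S) q j) * (\prod_(j in A :\: S) (1 - q j))
  = (1 - q i) * pmf_on (A :\ i) k.
Proof.
move=> iA; rewrite mulr_sumr; apply: eq_big => [S|S /andP[_ iS]].
  by rewrite subsetD1 andbAC.
rewrite [\prod_(j in A :\: S) _](bigD1 i) /=; last by rewrite !inE iS iA.
rewrite mulrCA; congr (_ * (_ * _)).
by apply: eq_bigl => j; rewrite !inE; case: (j == i); case: (j \in S); case: (j \in A).
Qed.

Lemma pmf_on_cond (A : {set 'I_n}) i k : i \in A ->
  pmf_on A k = q i * shift (pmf_on (A :\ i)) k + (1 - q i) * pmf_on (A :\ i) k.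
Proof.
move=> iA; rewrite /pmf_on (bigID (fun S : {set 'I_n} => i \in S)) /=.
by rewrite pmf_on_with // pmf_on_without.
Qed.

Hypothesis q01 : forall j, 0 <= q j <= 1.

Lemma pmf_on_ge0 (A : {set 'I_n}) k : 0 <= pmf_on A k.
Proof.
apply: sumr_ge0 => S _; apply: mulr_ge0; apply: prodr_ge0 => j _;
  have /andP[q0 q1] := q01 j; lra.
Qed.

Lemma pmf_on_gt_card (A : {set 'I_n}) k : (#|A| < k)%N -> pmf_on A k = 0.
Proof.
move=> Ak; apply: big1 => S /andP[/subset_leq_card SA /eqP Sk].
by move: Ak; rewrite -Sk ltnNge SA.
Qed.

(* Bernoulli sums have log-concave pmfs: induction on #|A|, since by
   pmf_on_cond the pmf on A is k |-> q i * G k + (1 - q i) * G (k + 1)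
   with G = shift (pmf_on (A :\ i)). *)
Lemma pmf_on_log_concave (A : {set 'I_n}) : log_concave (pmf_on A).
Proof.
elim: {A}#|A| {-2}A (erefl #|A|) => [|m IH] A cardA.
  split=> [k|i j _]; first exact: pmf_on_ge0.
  by rewrite (@pmf_on_gt_card A j.+2) ?cardA // mulr0 mulr_ge0 ?pmf_on_ge0.
have /card_gt0P[i iA] : (0 < #|A|)%N by rewrite cardA.
have cardAi : #|A :\ i| = m by move: cardA; rewrite (cardsD1 i) iA add1n => -[].
apply: (log_concave_ext (fun k => pmf_on_cond k iA)).
exact/log_concave_mix/log_concave_shift/IH.
Qed.

End BernoulliSum.

Lemma sumr_sym_ge0 (R : realFieldType) (I : finType) (T : I -> I -> R) :
  (forall i j, 0 <= T i j + T j i) -> 0 <= \sum_i \sum_j T i j.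
Proof.
move=> Tsym; have : 0 <= \sum_i \sum_j (T i j + T j i).
  by apply: sumr_ge0 => i _; apply: sumr_ge0.
under eq_bigr do rewrite big_split.
by rewrite big_split /= [X in _ + X]exchange_big /=; lra.
Qed.

Lemma sumr_cross (R : realFieldType) (I : finType) (x y z w : I -> R) :
  (\sum_i x i) * (\sum_j y j) - (\sum_i z i) * (\sum_j w j)
  = \sum_i \sum_j (x i * y j - z i * w j).
Proof.
rewrite !mulr_suml -sumrB; apply: eq_bigr => i _.
by rewrite !mulr_sumr -sumrB.
Qed.

Section SheppOlkin.
Variables (R : realFieldType) (n : nat) (b p : 'I_n -> R).
Hypotheses (b0 : forall i, 0 <= b i) (p01 : forall i, 0 <= p i <= 1).

Let fo (i : 'I_n) : nat -> R := pmf_on p (~: [set i]).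

Definition so_G (m : nat) : R := \sum_(i < n) b i * p i * fo i m.
Definition so_H (m : nat) : R := \sum_(i < n) b i * (1 - p i) * fo i m.

Lemma so_shiftG m : shift so_G m = \sum_(i < n) b i * p i * shift (fo i) m.
Proof. by case: m => [|m] //=; rewrite big1 // => i _; rewrite mulr0. Qed.

Lemma so_vf_split m :
  (\sum_(i < n) b i) * bern_pmf p m = shift so_G m + so_H m.
Proof.
rewrite so_shiftG mulr_suml -big_split; apply: eq_bigr => i _ /=.
by rewrite bern_pmfE (pmf_on_cond _ _ (in_setT i)) setTD /fo; ring.
Qed.

Lemma so_alphaE m :
  so_alpha b p m = shift so_G m / ((\sum_(i < n) b i) * bern_pmf p m).
Proof.
rewrite so_shiftG; congr (_ / _); apply: eq_bigr => i _; congr (_ * _).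
by case: m => [|m] //=; rewrite bern_pmf_omitE.
Qed.

Lemma so_one_sub_alphaE m : (\sum_(i < n) b i) * bern_pmf p m != 0 ->
  1 - so_alpha b p m = so_H m / ((\sum_(i < n) b i) * bern_pmf p m).
Proof. by move=> vf0; rewrite so_alphaE so_vf_split in vf0 *; field. Qed.

(* The (i, j) and (j, i) terms of G_k H_{k+1} - G_{k+1} H_k combine into
   b_i b_j (p_i - p_j)^2 (y^2 - x z), where x, y, z stand for F_{k-1},
   F_k, F_{k+1} with F the pmf omitting both i and j. *)
Lemma so_pair_identity (bi bj pi pj x y z : R) :
  bi * pi * (pj * x + (1 - pj) * y) * (bj * (1 - pj) * (pi * y + (1 - pi) * z)) -
  bi * pi * (pj * y + (1 - pj) * z) * (bj * (1 - pj) * (pi * x + (1 - pi) * y)) +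
  (bj * pj * (pi * x + (1 - pi) * y) * (bi * (1 - pi) * (pj * y + (1 - pj) * z)) -
   bj * pj * (pi * y + (1 - pi) * z) * (bi * (1 - pi) * (pj * x + (1 - pj) * y)))
  = bi * bj * (pi - pj) ^+ 2 * (y ^+ 2 - x * z).
Proof. by ring. Qed.

Lemma so_cross_ge0 k : 0 <= so_G k * so_H k.+1 - so_G k.+1 * so_H k.
Proof.
pose T i j := b i * p i * fo i k * (b j * (1 - p j) * fo j k.+1)
            - b i * p i * fo i k.+1 * (b j * (1 - p j) * fo j k).
have -> : so_G k * so_H k.+1 - so_G k.+1 * so_H k = \sum_i \sum_j T i j.
  exact: sumr_cross.
apply: sumr_sym_ge0 => i j; have [<-|neq_ij] := eqVneq i j.
  have -> : T i i = 0 by rewrite /T; ring.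
  by rewrite addr0.
pose F := pmf_on p (~: [set i] :\ j).
have foiE m : fo i m = p j * shift F m + (1 - p j) * F m.
  by apply: pmf_on_cond; rewrite !inE eq_sym.
have fojE m : fo j m = p i * shift F m + (1 - p i) * F m.
  have setE : ~: [set j] :\ i = ~: [set i] :\ j.
    by apply/setP => x; rewrite !inE andbC.
  by rewrite /F -setE; apply: pmf_on_cond; rewrite !inE.
rewrite /T !foiE !fojE [shift F k.+1]/= so_pair_identity.
rewrite mulr_ge0 ?subr_ge0 ?(mulr_ge0 (mulr_ge0 _ _) (sqr_ge0 _)) //.
exact/log_concave_local/pmf_on_log_concave.
Qed.

End SheppOlkin.

Unset Implicit Arguments. Set Strict Implicit.

Theorem proposition5p4 (R : realFieldType) (n : nat) (a b : 'I_n -> R)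
  (hrange : forall (i : 'I_n) (s : R), 0 <= s <= 1 -> 0 <= a i + b i * s <= 1)
  (hder : forall i : 'I_n, 0 <= b i)
  (hv : 0 < \sum_(i < n) b i)
  (t : R) (ht : 0 <= t <= 1)
  (hf : forall k : nat, (k <= n)%N -> 0 < bern_pmf (fun i => a i + b i * t) k) :
  let p := fun i : 'I_n => a i + b i * t in
  let f := bern_pmf p in
  let alpha := so_alpha b p in
  forall k : nat, (k.+2 <= n)%N ->
    0 <= alpha k.+1 * (1 - alpha k.+1) * f k.+1 ^+ 2
         - alpha k.+2 * (1 - alpha k) * f k * f k.+2.
Proof.
move=> p f alpha k hk.
have p01 i : 0 <= p i <= 1 by exact: hrange.
set v := \sum_(i < n) b i.
have v0 : v != 0 by rewrite gt_eqF.
have f0 m : (m <= n)%N -> f m != 0 by move=> hm; rewrite gt_eqF ?hf.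
have fk0 := f0 k (ltnW (ltnW hk)); have fk10 := f0 k.+1 (ltnW hk).
have fk20 := f0 k.+2 hk.
have -> : alpha k.+1 * (1 - alpha k.+1) * f k.+1 ^+ 2
          - alpha k.+2 * (1 - alpha k) * f k * f k.+2
        = (so_G b p k * so_H b p k.+1 - so_G b p k.+1 * so_H b p k) / v ^+ 2.
  rewrite /alpha !so_one_sub_alphaE ?mulf_neq0 // !so_alphaE -/v -/f /=.
  by field; rewrite v0 fk0 fk10 fk20.
by rewrite divr_ge0 ?sqr_ge0 // so_cross_ge0.
Qed.
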